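(* Fix any constant $c > 0$. There exists an adaptive algorithm that, given $n$ items among which an unknown number $k$ are defective and accessed through noisy group tests as in the context, outputs $\bar k$ satisfying $\frac{\bar k}{2} \le k \le \bar k$ with probability $1 - O(n^{-c})$, using an average of $O(\log k \cdot \log n)$ tests. Moreover, for any fixed $\epsilon \in (0,1)$ there exists such an algorithm outputting $\bar k$ with $(1-\epsilon)\bar k \le k \le \bar k$ with probability $1-O(n^{-c})$, using an average of $O(\log k\cdot\log n)$ tests, where the implicit constant in the number of tests depends on $\epsilon$.
   Context: Noisy group test: a test is a subset (pool) of the items, and its outcome is $Y = U \oplus Z$, where $U=1$ if the pool contains at least one defective and $U=0$ otherwise, $Z\sim\mathrm{Bernoulli}(\rho)$ for a fixed $\rho \in (0,\frac12)$ independently across tests, and $\oplus$ is addition modulo 2. Tests may be chosen adaptively (depending on previous outcomes) and the number of tests may be random. Asymptotics are as $n\to\infty$. *)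

From mathcomp Require Import all_boot.
From Stdlib Require Import Reals.

Set Implicit Arguments.
Unset Strict Implicit.
Unset Printing Implicit Defensive.

(* Items are 'I_n; the defective set is D : {set 'I_n}, k = #|D|.
   A pool is A : {set 'I_n}; U = 1 iff A meets D; Y = U xor Z with
   Z ~ Bernoulli(rho) independent across tests. *)

Inductive action (n : nat) : Type :=
| Test of {set 'I_n}
| Output of nat.

(* A history records, for each step taken so far, the index of the action
   chosen (among the algorithm's randomized options) and the observed test
   outcome. *)
Definition history := seq (nat * bool).

Definition strategy (n : nat) := history -> seq (R * action n).

Definition wsum {A : Type} (s : seq (R * A)) : R :=
  foldr (fun p acc => (p.1 + acc)%R) 0%R s.

Definition valid_strategy (n : nat) (alg : strategy n) : Prop :=
  forall h : history,
    List.Forall (fun p : R * action n => (0 <= p.1)%R) (alg h) /\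
    wsum (alg h) = 1%R.

Definition pos_prob (rho : R) (n : nat) (D : {set 'I_n}) (A : {set 'I_n}) : R :=
  if [disjoint A & D] then rho else (1 - rho)%R.

Fixpoint halt_prob (rho : R) (n : nat) (D : {set 'I_n}) (alg : strategy n)
    (good : nat -> bool) (N : nat) (h : history) : R :=
  match N with
  | 0 => 0%R
  | N'.+1 =>
      let cs := alg h in
      foldr Rplus 0%R
        (map (fun ic : nat * (R * action n) =>
                let '(i, (w, a)) := ic in
                (w * match a with
                     | Output m => if good m then 1 else 0
                     | Test A =>
                         let q := pos_prob rho D A in
                         q * halt_prob rho D alg good N' (rcons h (i, true))
                         + (1 - q) * halt_prob rho D alg good N' (rcons h (i, false))
                     end)%R)
             (zip (iota 0 (size cs)) cs))
  end.

(* Expected number of tests performed among the first N steps, i.e.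
   E[min(T, N)]-type truncation; its supremum over N is E[T]. *)
Fixpoint exp_tests (rho : R) (n : nat) (D : {set 'I_n}) (alg : strategy n)
    (N : nat) (h : history) : R :=
  match N with
  | 0 => 0%R
  | N'.+1 =>
      let cs := alg h in
      foldr Rplus 0%R
        (map (fun ic : nat * (R * action n) =>
                let '(i, (w, a)) := ic in
                (w * match a with
                     | Output _ => 0
                     | Test A =>
                         let q := pos_prob rho D A in
                         1 + q * exp_tests rho D alg N' (rcons h (i, true))
                         + (1 - q) * exp_tests rho D alg N' (rcons h (i, false))
                     end)%R)
             (zip (iota 0 (size cs)) cs))
  end.

Definition good_half (k kbar : nat) : bool := (kbar <= 2 * k) && (k <= kbar).

Definition good_eps (eps : R) (k kbar : nat) : bool :=
  if Rle_dec ((1 - eps) * INR kbar) (INR k) then (k <= kbar) else false.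

(* The family alg (one strategy per n) is a valid algorithm which, for all
   large n and every defective set D (k = #|D|), uses on average
   O(log(k+2) * log n) tests and outputs a good estimate with probability
   at least 1 - O(n^{-c}) (probability = sup over N of halt_prob). *)
Definition achieves (rho c : R) (good : nat -> nat -> bool)
    (alg : forall n : nat, strategy n) : Prop :=
  (forall n, valid_strategy (alg n)) /\
  exists (C1 C2 : R) (n0 : nat),
    forall n : nat, (n0 <= n)%N -> forall D : {set 'I_n},
      (forall N : nat,
         (exp_tests rho D (alg n) N [::]
            <= C1 * ln (INR #|D| + 2) * ln (INR n))%R) /\
      (forall e : R, (0 < e)%R -> exists N : nat,
         (1 - C2 * Rpower (INR n) (- c) - e
            <= halt_prob rho D (alg n) (good #|D|) N [::])%R).

From mathcomp Require Import all_boot ssralg Rstruct zify.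
From Stdlib Require Import Reals Lra Lia Psatz FunctionalExtensionality.

Set Implicit Arguments.
Unset Strict Implicit.
Unset Printing Implicit Defensive.

Import GRing.Theory.
Local Open Scope R_scope.

(* Stage j runs m tests on random pools containing each item independently
   with probability 1 - 2^(-1/T_j), where T_j = ratio^(j-1) and
   ratio = (1 - eps)^(-1/2).  Such a pool misses all k defectives with
   probability 2^(-k/T_j), so a test is positive with probability
   q_j = 1 - rho - (1 - 2 rho) 2^(-k/T_j), which is at most 1/2 when k <= T_j
   and at least 1/2 + gap when k >= ratio T_j.  The algorithm stops at the
   first stage whose fraction of positive tests is at most 1/2 + gap/2 and
   outputs the largest integer below ratio T_j; stopping at a stage with
   T_(j-1) < k < ratio T_j yields an estimate within a factor 1 - eps of k.
   An exponential (Chernoff) supermartingale shows that each of the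
   J = O(log n) stages errs with probability at most e^(-rate m), which is
   O(n^(-c-1)) for m = Theta(log n).  A second supermartingale bounds the
   expected number of tests by m (2 + j0) whenever T_(j0) >= k, since each
   stage beyond j0 is entered with probability at most 1/2; here
   j0 = O(log k) and m = O(log n). *)

(** * Stopped chains driving a strategy *)

Section StoppedChain.
Variables (S : Type) (stopped : S -> bool) (q : S -> R) (step : S -> bool -> S).
Variables (output : S -> nat) (good : nat -> bool).

Fixpoint chain_success (N : nat) (s : S) : R :=
  match N with
  | 0 => 0
  | N'.+1 =>
      if stopped s then (if good (output s) then 1 else 0)
      else q s * chain_success N' (step s true)
           + (1 - q s) * chain_success N' (step s false)
  end.

Fixpoint chain_tests (N : nat) (s : S) : R :=
  match N with
  | 0 => 0
  | N'.+1 =>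
      if stopped s then 0
      else 1 + q s * chain_tests N' (step s true)
           + (1 - q s) * chain_tests N' (step s false)
  end.

Variable inv : S -> Prop.
Hypothesis inv_step : forall s b, inv s -> ~~ stopped s -> inv (step s b).
Hypothesis q_prob : forall s, inv s -> ~~ stopped s -> 0 <= q s <= 1.

Lemma chain_success_ge (Psi : S -> R) (rank : S -> nat) :
  (forall s, inv s -> stopped s -> 1 - Psi s <= (if good (output s) then 1 else 0)) ->
  (forall s b, inv s -> ~~ stopped s -> (rank (step s b) < rank s)%nat) ->
  (forall s, inv s -> ~~ stopped s ->
     q s * Psi (step s true) + (1 - q s) * Psi (step s false) <= Psi s) ->
  forall N s, inv s -> (rank s < N)%nat -> 1 - Psi s <= chain_success N s.
Proof.
move=> Psi_stop rank_step Psi_super; elim=> [|N IH] s inv_s rank_s //=.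
case: ifP => [stop_s | /negbT run_s]; first exact: Psi_stop.
have [q0 q1] := q_prob inv_s run_s.
have := Psi_super s inv_s run_s.
have := IH _ (inv_step true inv_s run_s) (leq_trans (rank_step s true inv_s run_s) rank_s).
have := IH _ (inv_step false inv_s run_s) (leq_trans (rank_step s false inv_s run_s) rank_s).
nra.
Qed.

Lemma chain_tests_le (Th : S -> R) :
  (forall s, inv s -> 0 <= Th s) ->
  (forall s, inv s -> ~~ stopped s ->
     1 + q s * Th (step s true) + (1 - q s) * Th (step s false) <= Th s) ->
  forall N s, inv s -> chain_tests N s <= Th s.
Proof.
move=> Th_ge0 Th_super; elim=> [|N IH] s inv_s /=; first exact: Th_ge0.
case: ifP => [_ | /negbT run_s]; first exact: Th_ge0.
have [q0 q1] := q_prob inv_s run_s.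
have := Th_super s inv_s run_s.
have := IH _ (inv_step true inv_s run_s); have := IH _ (inv_step false inv_s run_s).
nra.
Qed.

End StoppedChain.

Definition is_distribution {A : Type} (l : seq (R * A)) : Prop :=
  List.Forall (fun p : R * A => 0 <= p.1) l /\ wsum l = 1.

Definition pool_pos_prob (rho : R) n (D : {set 'I_n}) (l : seq (R * {set 'I_n})) : R :=
  foldr Rplus 0 (map (fun wA => wA.1 * pos_prob rho D wA.2) l).

Lemma wsum_affine {A : Type} (pos : A -> R) (l : seq (R * A)) (b X Y : R) :
  foldr Rplus 0 (map (fun wA => wA.1 * (b + pos wA.2 * X + (1 - pos wA.2) * Y)) l)
  = wsum l * b + foldr Rplus 0 (map (fun wA => wA.1 * pos wA.2) l) * X
    + (wsum l - foldr Rplus 0 (map (fun wA => wA.1 * pos wA.2) l)) * Y.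
Proof. elim: l => [|[w a] l IH] /=; rewrite ?IH; ring. Qed.

Section ChainStrategy.
Variables (n : nat) (S : Type) (start : S) (stopped : S -> bool) (output : S -> nat).
Variables (pools : S -> seq (R * {set 'I_n})) (step : S -> bool -> S).

Definition chain_state (h : history) : S := foldl (fun s p => step s p.2) start h.

Definition chain_strategy : strategy n := fun h =>
  let s := chain_state h in
  if stopped s then [:: (1, Output n (output s))]
  else [seq (wA.1, Test wA.2) | wA <- pools s].

Lemma chain_state_rcons h p : chain_state (rcons h p) = step (chain_state h) p.2.
Proof. by rewrite /chain_state foldl_rcons. Qed.

Lemma wsum_tests (l : seq (R * {set 'I_n})) :
  wsum [seq (wA.1, Test wA.2) | wA <- l] = wsum l.
Proof. by elim: l => [|[w A] l IH] //=; rewrite IH. Qed.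

Hypothesis pools_distr : forall s, ~~ stopped s -> is_distribution (pools s).

Lemma chain_strategy_valid : valid_strategy chain_strategy.
Proof.
move=> h; rewrite /chain_strategy; case: ifP => [_ | /negbT /pools_distr [w_ge0 w_sum]].
  by split; [constructor; [rewrite /=; lra | constructor] | rewrite /wsum /=; lra].
split; last by rewrite wsum_tests.
by elim: w_ge0 => [|[w A] l w0 _ IH] /=; constructor.
Qed.

Variables (rho : R) (D : {set 'I_n}).
Let q s := pool_pos_prob rho D (pools s).

Lemma foldr_tests (F : nat * (R * action n) -> R) (G : {set 'I_n} -> R) l k :
  (forall i w A, F (i, (w, Test A)) = w * G A) ->
  foldr Rplus 0 (map F (zip (iota k (size [seq (wA.1, Test wA.2) | wA <- l]))
                             [seq (wA.1, Test wA.2) | wA <- l]))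
  = foldr Rplus 0 (map (fun wA => wA.1 * G wA.2) l).
Proof. by move=> FG; elim: l k => [|[w A] l IH] k //=; rewrite FG IH. Qed.

Lemma chain_strategy_stopped h : stopped (chain_state h) ->
  chain_strategy h = [:: (1, Output n (output (chain_state h)))].
Proof. by rewrite /chain_strategy => ->. Qed.

Lemma chain_strategy_running h : ~~ stopped (chain_state h) ->
  chain_strategy h = [seq (wA.1, Test wA.2) | wA <- pools (chain_state h)].
Proof. by rewrite /chain_strategy => /negbTE ->. Qed.

Lemma halt_prob_chain good N h :
  halt_prob rho D chain_strategy good N h
  = chain_success stopped q step output good N (chain_state h).
Proof.
elim: N h => [|N IH] h //=.
have [stop_s | run_s] := boolP (stopped (chain_state h)).
  by rewrite chain_strategy_stopped //=; case: (good _); ring.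
rewrite chain_strategy_running //.
set X := chain_success _ _ _ _ _ _ (step _ true).
set Y := chain_success _ _ _ _ _ _ (step _ false).
rewrite (@foldr_tests _ (fun A => 0 + pos_prob rho D A * X + (1 - pos_prob rho D A) * Y)).
  by rewrite wsum_affine (proj2 (pools_distr run_s)) /q /pool_pos_prob; ring.
by move=> i w A /=; rewrite !IH !chain_state_rcons /X /Y /=; ring.
Qed.

Lemma exp_tests_chain N h :
  exp_tests rho D chain_strategy N h = chain_tests stopped q step N (chain_state h).
Proof.
elim: N h => [|N IH] h //=.
have [stop_s | run_s] := boolP (stopped (chain_state h)).
  by rewrite chain_strategy_stopped //=; ring.
rewrite chain_strategy_running //.
set X := chain_tests _ _ _ _ (step _ true).
set Y := chain_tests _ _ _ _ (step _ false).
rewrite (@foldr_tests _ (fun A => 1 + pos_prob rho D A * X + (1 - pos_prob rho D A) * Y)).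
  by rewrite wsum_affine (proj2 (pools_distr run_s)) /q /pool_pos_prob; ring.
by move=> i w A /=; rewrite !IH !chain_state_rcons.
Qed.

End ChainStrategy.

(** * Random pools *)

Section RandomPool.
Local Open Scope ring_scope.
Variable n : nat.

Definition pool_weight (p : R) (f : {ffun 'I_n -> bool}) : R :=
  \prod_i (if f i then p else 1 - p).

Definition random_pool (p : R) : seq (R * {set 'I_n}) :=
  [seq (pool_weight p f, [set i | f i]) | f <- enum {ffun 'I_n -> bool}].

Lemma foldr_Rplus_pairs {A B : Type} (F : R * B -> R) (G : A -> R) (H : A -> B) (l : seq A) :
  foldr Rplus 0 (map F [seq (G x, H x) | x <- l]) = \sum_(x <- l) F (G x, H x).
Proof. by elim: l => [|a l IH] /=; rewrite ?big_nil ?big_cons ?IH. Qed.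

Lemma wsum_map {A B : Type} (F : A -> R) (G : A -> B) (l : seq A) :
  wsum [seq (F x, G x) | x <- l] = \sum_(x <- l) F x.
Proof. by elim: l => [|a l IH] /=; rewrite ?big_nil ?big_cons ?IH. Qed.

Lemma sum_pool_weight p : \sum_f pool_weight p f = 1.
Proof.
rewrite /pool_weight -(bigA_distr_bigA (fun i (b : bool) => if b then p else 1 - p)).
by rewrite big1 // => i _; rewrite big_bool /= addrC subrK.
Qed.

Lemma wsum_random_pool p : wsum (random_pool p) = 1.
Proof. by rewrite wsum_map big_enum sum_pool_weight. Qed.

Lemma disjoint_indicator (T : finType) (A D : {set T}) :
  (if [disjoint A & D] then 1 else 0) = \prod_i (if (i \in A) && (i \in D) then 0 else 1) :> R.
Proof.
have [i /andP [iA iD] | none] := pickP (fun i => (i \in A) && (i \in D)).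
  rewrite (bigD1 i) /= ?iA ?iD // mul0r.
  suff /negbTE -> : ~~ [disjoint A & D] by [].
  by apply/negP => /disjointFr /(_ iA); rewrite iD.
rewrite big1 => [|i _]; last by rewrite none.
suff -> : [disjoint A & D] by [].
rewrite disjoint_subset; apply/subsetP => i iA; rewrite inE /=.
by apply/negP => iD; move: (none i); rewrite /= iA iD.
Qed.

Lemma random_pool_miss p (D : {set 'I_n}) :
  \sum_f pool_weight p f * (if [disjoint [set i | f i] & D] then 1 else 0) = (1 - p) ^+ #|D|.
Proof.
pose F i (b : bool) := (if b then p else 1 - p) * (if b && (i \in D) then 0 else 1).
rewrite (eq_bigr (fun f : {ffun 'I_n -> bool} => \prod_i F i (f i))) => [|f _]; last first.
  by rewrite disjoint_indicator /pool_weight -big_split; apply: eq_bigr => i _; rewrite inE.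
rewrite -(bigA_distr_bigA F) /F.
rewrite -prodr_const (big_mkcond (fun i => i \in D)) /=; apply: eq_bigr => i _.
by rewrite big_bool /=; case: (i \in D); rewrite ?mulr0 ?mulr1 ?add0r // addrC subrK.
Qed.

End RandomPool.

Lemma random_pool_ge0 n p : 0 <= p <= 1 ->
  List.Forall (fun wA : R * {set 'I_n} => 0 <= wA.1) (random_pool n p).
Proof.
move=> [p0 p1]; rewrite /random_pool.
elim: (enum {ffun _ -> _}) => [|f l IH] /=; constructor => //=.
rewrite /pool_weight; elim/big_ind: _ => [|x y x0 y0|i _]; first exact: Rle_0_1.
  exact: Rmult_le_pos.
by case: (f i); [| change (0 <= 1 - p)]; lra.
Qed.

Lemma random_pool_distribution n p : 0 <= p <= 1 -> is_distribution (random_pool n p).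
Proof. by move=> p01; split; [exact: random_pool_ge0 | exact: wsum_random_pool]. Qed.

Lemma pool_pos_prob_random_pool rho n p (D : {set 'I_n}) :
  pool_pos_prob rho D (random_pool n p) = 1 - rho - (1 - 2 * rho) * (1 - p) ^ #|D|.
Proof.
have E f : pool_weight p f * pos_prob rho D [set i | f i] = (1 - rho) * pool_weight p f
    - (1 - 2 * rho) * (pool_weight p f * if [disjoint [set i | f i] & D] then 1 else 0).
  by rewrite /pos_prob; case: ifP => _; ring.
rewrite /pool_pos_prob foldr_Rplus_pairs big_enum /= (eq_bigr _ (fun f _ => E f)).
under eq_bigr do rewrite RminusE.
by rewrite sumrB -!mulr_sumr random_pool_miss sum_pool_weight mulr1 -RpowE.
Qed.

Lemma exp_le x y : x <= y -> exp x <= exp y.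
Proof. by case=> [/exp_increasing/Rlt_le | ->] //; exact: Rle_refl. Qed.

Lemma exp_ge1 x : 0 <= x -> 1 <= exp x.
Proof. by move/exp_le; rewrite exp_0. Qed.

Lemma exp_pow x k : exp x ^ k = exp (INR k * x).
Proof.
elim: k => [|k IH]; first by rewrite /= Rmult_0_l exp_0.
by rewrite S_INR -tech_pow_Rmult IH -exp_plus; congr exp; ring.
Qed.

Lemma ln_le x y : 0 < x -> x <= y -> ln x <= ln y.
Proof. by move=> x0 [xy | ->]; [exact/Rlt_le/ln_increasing | exact: Rle_refl]. Qed.

Lemma ln_le_id x : 0 < x -> ln x <= x.
Proof. by move=> x_pos; have := exp_ineq1_le (ln x); rewrite exp_ln //; lra. Qed.

Lemma ln_ge1 n : (3 <= n)%nat -> 1 <= ln (INR n).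
Proof.
move=> /leP /le_INR /= n_ge3; rewrite -(ln_exp 1); apply: ln_le; first exact: exp_pos.
by have := exp_le_3; lra.
Qed.

Definition nat_above (z : R) : nat := Z.to_nat (up z).

Lemma nat_above_spec z : 0 <= z -> z < INR (nat_above z) <= z + 1.
Proof.
move=> z0; have [z_lt z_le] := archimed z.
have up_ge0 : (0 <= up z)%Z by apply: le_0_IZR; lra.
rewrite /nat_above INR_IZR_INZ Znat.Z2Nat.id //; lra.
Qed.

(* [- up (- y)] is the integer in [[y - 1, y)]. *)
Definition nat_below (y : R) : nat := Z.to_nat (- up (- y)).

Lemma nat_below_spec y : 0 < y ->
  INR (nat_below y) < y /\ forall k : nat, INR k < y -> (k <= nat_below y)%nat.
Proof.
move=> y_pos; have [up_gt up_le] := archimed (- y).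
have z_gt : -1 < IZR (- up (- y)) by rewrite opp_IZR; lra.
have z_ge0 : (0 <= - up (- y))%Z by have := lt_IZR _ _ z_gt; lia.
rewrite /nat_below INR_IZR_INZ Znat.Z2Nat.id //; split; first by rewrite opp_IZR; lra.
move=> k; rewrite INR_IZR_INZ => k_lt.
have : (Z.of_nat k < - up (- y) + 1)%Z by apply: lt_IZR; rewrite plus_IZR opp_IZR; lra.
by move=> ?; apply/leP; lia.
Qed.

(** * Chernoff potentials *)

Section Chernoff.
Variables (q s th : R) (m : nat).

Definition bern_mgf := q * exp s + (1 - q).

(* E[exp (s (X - th m))] given x successes in the first t of m Bernoulli(q)
   trials, X being the total number of successes; a martingale in (t, x). *)
Definition chernoff_pot (t x : nat) : R := exp (s * (INR x - th * INR m)) * bern_mgf ^ (m - t).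

Lemma bern_mgf_ge0 : 0 <= q <= 1 -> 0 <= bern_mgf.
Proof. move=> q01; rewrite /bern_mgf; have := exp_pos s; nra. Qed.

Lemma chernoff_pot_ge0 t x : 0 <= q <= 1 -> 0 <= chernoff_pot t x.
Proof. by move=> q01; apply: Rmult_le_pos; [exact/Rlt_le/exp_pos | exact/pow_le/bern_mgf_ge0]. Qed.

Lemma chernoff_pot_step t x : (t < m)%nat ->
  chernoff_pot t x = q * chernoff_pot t.+1 x.+1 + (1 - q) * chernoff_pot t.+1 x.
Proof.
move=> lt_tm; rewrite /chernoff_pot (_ : (m - t = (m - t.+1).+1)%nat); last by lia.
rewrite -tech_pow_Rmult S_INR.
rewrite (_ : s * (INR x + 1 - th * INR m) = s * (INR x - th * INR m) + s); last by ring.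
rewrite exp_plus /bern_mgf; ring.
Qed.

Lemma chernoff_pot_end x : 0 <= s * (INR x - th * INR m) -> 1 <= chernoff_pot m x.
Proof. by move=> /exp_ge1; rewrite /chernoff_pot subnn /= Rmult_1_r. Qed.

Lemma chernoff_pot_start : 0 <= q <= 1 ->
  chernoff_pot 0 0 <= exp (INR m * (q * (exp s - 1) - s * th)).
Proof.
move=> q01; have mgf_le : bern_mgf <= exp (q * (exp s - 1)).
  by apply: Rle_trans (exp_ineq1_le _); rewrite /bern_mgf; lra.
rewrite /chernoff_pot subn0 INR_0 Rminus_0_l.
rewrite (_ : INR m * (q * (exp s - 1) - s * th) = s * - (th * INR m) + INR m * (q * (exp s - 1)));
  last by ring.
rewrite exp_plus -exp_pow; apply: Rmult_le_compat_l; first exact/Rlt_le/exp_pos.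
by apply: pow_incr; split; [exact: bern_mgf_ge0 | exact: mgf_le].
Qed.

End Chernoff.

Section Rates.
Variable gap : R.
Hypothesis gap_pos : 0 < gap <= 1/2.

Definition threshold := 1/2 + gap / 2.
Definition tilt := gap / 4.
Definition rate := gap ^ 2 / 16.

Lemma lower_tail_rate q : 1/2 + gap <= q <= 1 ->
  q * (exp (- tilt) - 1) - - tilt * threshold <= - rate.
Proof.
move=> [q_lo q_hi]; rewrite /tilt /threshold /rate.
set E := exp (- (gap / 4)).
have E_pos : 0 < E := exp_pos _.
have E_le : E * (1 + gap / 4) <= 1.
  have := exp_ineq1_le (gap / 4); have : exp (gap / 4) * E = 1.
    by rewrite /E -exp_plus Rplus_opp_r exp_0.
  nra.
nra.
Qed.

Lemma upper_tail_rate q : 0 <= q <= 1/2 ->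
  q * (exp tilt - 1) - tilt * threshold <= - rate.
Proof.
move=> [q_lo q_hi]; rewrite /tilt /threshold /rate.
set E := exp (gap / 4).
have E_le : E * (1 - gap / 4) <= 1.
  have := exp_ineq1_le (- (gap / 4)); have : exp (- (gap / 4)) * E = 1.
    by rewrite /E -exp_plus Rplus_opp_l exp_0.
  have := exp_pos (- (gap / 4)). nra.
have := exp_ineq1_le (gap / 4); rewrite -/E.
nra.
Qed.

End Rates.

(* The probability of a positive test when the pool misses every defective
   with probability 2^(-z). *)
Definition pos_prob_at (rho z : R) : R := 1 - rho - (1 - 2 * rho) * exp (- (z * ln 2)).

Lemma ln2_pos : 0 < ln 2.
Proof. by have := ln_lt_2; lra. Qed.

Section PosProbAt.
Variable rho : R.
Hypothesis rho_half : 0 < rho < 1/2.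

Lemma pos_prob_at_1 : pos_prob_at rho 1 = 1/2.
Proof. by rewrite /pos_prob_at Rmult_1_l exp_Ropp exp_ln; [field | lra]. Qed.

Lemma pos_prob_at_le z1 z2 : z1 <= z2 -> pos_prob_at rho z1 <= pos_prob_at rho z2.
Proof.
move=> z12; have ln2 := ln2_pos.
have exp_z : exp (- (z2 * ln 2)) <= exp (- (z1 * ln 2)) by apply: exp_le; nra.
rewrite /pos_prob_at; nra.
Qed.

Lemma pos_prob_at_lt z1 z2 : z1 < z2 -> pos_prob_at rho z1 < pos_prob_at rho z2.
Proof.
move=> z12; rewrite /pos_prob_at.
have := exp_increasing (- (z2 * ln 2)) (- (z1 * ln 2)); have := ln2_pos; nra.
Qed.

Lemma pos_prob_at_range z : 0 <= z -> rho <= pos_prob_at rho z <= 1 - rho.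
Proof.
move=> z0; have ln2 := ln2_pos.
have exp_z : exp (- (z * ln 2)) <= 1 by rewrite -exp_0; apply: exp_le; nra.
rewrite /pos_prob_at; have := exp_pos (- (z * ln 2)); nra.
Qed.

End PosProbAt.

(* [Running j t x]: in stage j, t tests done so far, x of them positive. *)
Inductive state := Running of nat & nat & nat | Stopped of nat.

Definition stage_of (s : state) : nat := match s with Running j _ _ | Stopped j => j end.

Section Algorithm.
Variables (rho c eps : R) (n : nat).

Definition log_step := - ln (1 - eps) / 2.
Definition ratio := exp log_step.
Definition scale (j : nat) := exp ((INR j - 1) * log_step).
Definition incl_prob (j : nat) := 1 - exp (- ln 2 / scale j).
Definition gap := pos_prob_at rho ratio - 1/2.

Definition stage_len : nat := (nat_above ((c + 1) * ln (INR n) / rate gap) + 1)%nat.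
Definition num_stages : nat := nat_above (ln (INR n) / log_step).
Definition estimate (j : nat) : nat := nat_below (exp (INR j * log_step)).

Definition step (s : state) (b : bool) : state :=
  match s with
  | Running j t x =>
      let x' := if b then x.+1 else x in
      if (t.+1 < stage_len)%nat then Running j t.+1 x'
      else if Rle_dec (INR x') (threshold gap * INR stage_len) then Stopped j
      else Running j.+1 0 0
  | Stopped j => Stopped j
  end.

Definition stopped (s : state) : bool :=
  if s is Running j _ _ then (num_stages <= j)%nat else true.

Definition pools (s : state) : seq (R * {set 'I_n}) :=
  if s is Running j _ _ then random_pool n (incl_prob j) else [::].

Definition search_alg : strategy n :=
  chain_strategy (Running 0 0 0) stopped (fun s => estimate (stage_of s)) pools step.

Lemma incl_prob_range j : 0 <= incl_prob j <= 1.
Proof.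
have scale_pos : 0 < scale j := exp_pos _.
have arg_le0 : - ln 2 / scale j <= 0.
  by rewrite /Rdiv; have := Rinv_0_lt_compat _ scale_pos; have := ln2_pos; nra.
have := exp_le arg_le0; rewrite exp_0 /incl_prob; have := exp_pos (- ln 2 / scale j); lra.
Qed.

Lemma pools_distribution s : ~~ stopped s -> is_distribution (pools s).
Proof. by case: s => [j t x|j] // _; exact/random_pool_distribution/incl_prob_range. Qed.

Lemma search_alg_valid : valid_strategy search_alg.
Proof. exact/chain_strategy_valid/pools_distribution. Qed.

End Algorithm.

Section Constants.
Variables (rho eps : R).
Hypothesis rho_half : 0 < rho < 1/2.
Hypothesis eps01 : 0 < eps < 1.

Lemma log_step_pos : 0 < log_step eps.
Proof.
have : ln (1 - eps) < 0 by rewrite -ln_1; apply: ln_increasing; lra.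
rewrite /log_step; lra.
Qed.

Lemma ratio_gt1 : 1 < ratio eps.
Proof. by rewrite /ratio -exp_0; apply/exp_increasing/log_step_pos. Qed.

Lemma gap_range : 0 < gap rho eps <= 1/2.
Proof.
have := pos_prob_at_lt rho_half ratio_gt1; rewrite pos_prob_at_1.
have := pos_prob_at_range rho_half (Rlt_le _ _ (Rlt_trans _ _ _ Rlt_0_1 ratio_gt1)).
rewrite /gap; lra.
Qed.

Lemma rate_pos : 0 < rate (gap rho eps).
Proof. by rewrite /rate; have [g0 _] := gap_range; nra. Qed.

Lemma scale_le i j : (i <= j)%nat -> scale eps i <= scale eps j.
Proof.
move=> /leP /le_INR ij; apply: exp_le.
by apply: Rmult_le_compat_r; [exact/Rlt_le/log_step_pos | lra].
Qed.

Lemma ratio_scale j : ratio eps * scale eps j = exp (INR j * log_step eps).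
Proof. by rewrite /ratio /scale -exp_plus; congr exp; ring. Qed.

Lemma eps_scale j : (1 - eps) * exp (INR j.+1 * log_step eps) = scale eps j.
Proof.
have -> : 1 - eps = exp (- (2 * log_step eps)).
  by rewrite /log_step (_ : - (2 * (- ln (1 - eps) / 2)) = ln (1 - eps)) ?exp_ln //; [lra | field].
by rewrite -exp_plus /scale S_INR; congr exp; ring.
Qed.

End Constants.

(** * Error probability and expected number of tests *)

Section Analysis.
Variables (rho c eps : R) (n : nat) (D : {set 'I_n}).
Hypothesis rho_half : 0 < rho < 1/2.
Hypothesis eps01 : 0 < eps < 1.
Hypothesis n_ge3 : (3 <= n)%nat.

Local Notation K := (INR #|D|).
Local Notation m := (stage_len rho c eps n).
Local Notation M := (INR (stage_len rho c eps n)).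
Local Notation J := (num_stages eps n).
Local Notation T := (scale eps).
Local Notation gap := (gap rho eps).
Local Notation step := (step rho c eps n).
Local Notation stopped := (stopped eps n).

Definition stage_pos_prob (j : nat) : R := pos_prob_at rho (K / T j).

Lemma scale_pos j : 0 < T j.
Proof. exact: exp_pos. Qed.

Lemma pool_pos_prob_stage j :
  pool_pos_prob rho D (random_pool n (incl_prob eps j)) = stage_pos_prob j.
Proof.
rewrite pool_pos_prob_random_pool /incl_prob /stage_pos_prob /pos_prob_at.
rewrite (_ : 1 - (1 - exp (- ln 2 / T j)) = exp (- ln 2 / T j)) ?exp_pow; last by ring.
have T0 := scale_pos j; congr (_ - _ * exp _); field; lra.
Qed.

Lemma stage_pos_prob_range j : rho <= stage_pos_prob j <= 1 - rho.
Proof.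
apply: pos_prob_at_range => //; apply: Rmult_le_pos; first exact: pos_INR.
exact/Rlt_le/Rinv_0_lt_compat/scale_pos.
Qed.

Lemma stage_pos_prob_large j : ratio eps * T j <= K -> 1/2 + gap <= stage_pos_prob j.
Proof.
move=> large; rewrite /gap; suff : pos_prob_at rho (ratio eps) <= stage_pos_prob j by lra.
apply: pos_prob_at_le => //; have := scale_pos j.
by move=> T0; apply: (Rmult_le_reg_r (T j)) => //; rewrite /Rdiv Rmult_assoc Rinv_l; lra.
Qed.

Lemma stage_pos_prob_small j : K <= T j -> stage_pos_prob j <= 1/2.
Proof.
move=> small; rewrite -(pos_prob_at_1 rho); apply: pos_prob_at_le => //.
have := scale_pos j.
by move=> T0; apply: (Rmult_le_reg_r (T j)) => //; rewrite /Rdiv Rmult_assoc Rinv_l; lra.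
Qed.

Local Notation q := stage_pos_prob.

Lemma M_pos : 0 < M.
Proof. by apply: lt_0_INR; apply/ltP; rewrite /stage_len addn1. Qed.

Lemma stage_pos_prob01 j : 0 <= q j <= 1.
Proof. have := stage_pos_prob_range j; lra. Qed.

(* Stage j fails by stopping if k >= ratio T_j and by continuing if k <= T_j;
   in between, either outcome is acceptable. *)
Definition stage_err (j t x : nat) : R :=
  if Rle_dec (ratio eps * T j) K then chernoff_pot (q j) (- tilt gap) (threshold gap) m t x
  else if Rle_dec K (T j) then chernoff_pot (q j) (tilt gap) (threshold gap) m t x
  else 0.

Fixpoint future_err (j d : nat) : R :=
  if d is d'.+1 then stage_err j 0 0 + future_err j.+1 d' else 0.

Definition overshot (j : nat) : bool :=
  if j is j'.+1 then (if Rle_dec K (T j') then true else false) else false.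

Definition bad_output (j : nat) : R := if good_eps eps #|D| (estimate eps j) then 0 else 1.

(* An upper bound on the probability of a bad output from state s on.  Once a
   stage j - 1 with k <= T_(j-1) has been passed, failure is charged in full. *)
Definition err_pot (s : state) : R :=
  match s with
  | Running j t x =>
      if (J <= j)%nat then bad_output j
      else if overshot j then 1 else stage_err j t x + future_err j.+1 (J - j.+1)
  | Stopped j => bad_output j
  end.

Lemma stage_err_ge0 j t x : 0 <= stage_err j t x.
Proof.
rewrite /stage_err; case: Rle_dec => ?; first exact: chernoff_pot_ge0 (stage_pos_prob01 j).
by case: Rle_dec => ?; [exact: chernoff_pot_ge0 (stage_pos_prob01 j) | exact: Rle_refl].
Qed.

Lemma future_err_ge0 j d : 0 <= future_err j d.
Proof.
elim: d j => [|d IH] j /=; first exact: Rle_refl.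
by apply: Rplus_le_le_0_compat; [exact: stage_err_ge0 | exact: IH].
Qed.

Lemma stage_err_step j t x : (t < m)%nat ->
  stage_err j t x = q j * stage_err j t.+1 x.+1 + (1 - q j) * stage_err j t.+1 x.
Proof.
move=> lt_tm; rewrite /stage_err; case: Rle_dec => ? /=; first exact: chernoff_pot_step.
by case: Rle_dec => ? /=; [exact: chernoff_pot_step | ring].
Qed.

Lemma stage_err_end_low j x :
  INR x <= threshold gap * M -> ratio eps * T j <= K -> 1 <= stage_err j m x.
Proof.
move=> x_low large; rewrite /stage_err; case: Rle_dec => // ?.
by apply: chernoff_pot_end; have := gap_range rho_half eps01; rewrite /tilt; nra.
Qed.

Lemma stage_err_end_high j x :
  threshold gap * M < INR x -> K <= T j -> 1 <= stage_err j m x.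
Proof.
move=> x_high small; rewrite /stage_err; case: Rle_dec => [large|?].
  by have := ratio_gt1 eps01; have := scale_pos j; nra.
case: Rle_dec => // ?.
by apply: chernoff_pot_end; have := gap_range rho_half eps01; rewrite /tilt; nra.
Qed.

Lemma estimate_good j : K < exp (INR j * log_step eps) -> ~~ overshot j ->
  good_eps eps #|D| (estimate eps j).
Proof.
move=> below not_over; have [est_lt est_max] := nat_below_spec (exp_pos (INR j * log_step eps)).
rewrite /good_eps /estimate; case: Rle_dec => [? | []] /=; first exact/est_max.
move: est_lt; clear est_max; case: j below not_over => [|j] below not_over est_lt.
  rewrite INR_0 Rmult_0_l exp_0 in est_lt *.
  have -> : nat_below 1 = 0%nat by apply/eqP; rewrite -leqn0 -ltnS; apply/ltP/INR_lt.
  by rewrite Rmult_0_r; exact: pos_INR.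
move: not_over; rewrite /overshot; case: Rle_dec => [// | /Rnot_le_lt over _].
rewrite -(eps_scale eps01 j) in over; apply/Rlt_le/(Rle_lt_trans _ _ _ _ over).
by apply: Rmult_le_compat_l; [lra | exact: Rlt_le].
Qed.

Lemma card_le_n : K <= INR n.
Proof. by apply/le_INR/leP; have := max_card D; rewrite card_ord. Qed.

Lemma n_lt_final : INR n < exp (INR J * log_step eps).
Proof.
have n_gt1 : 1 < INR n by apply: lt_1_INR; apply/ltP; lia.
have ln_n_pos : 0 < ln (INR n) by rewrite -ln_1; apply: ln_increasing; lra.
have step_pos := log_step_pos eps01.
have [J_gt _] := nat_above_spec (Rlt_le _ _ (Rdiv_lt_0_compat _ _ ln_n_pos step_pos)).
rewrite -{1}(exp_ln (INR n)); last lra.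
apply: exp_increasing; rewrite /num_stages.
have := Rmult_lt_compat_r _ _ _ step_pos J_gt.
by rewrite /Rdiv Rmult_assoc Rinv_l ?Rmult_1_r //; lra.
Qed.

Lemma K_lt_final : K < exp (INR J * log_step eps).
Proof. exact: Rle_lt_trans card_le_n n_lt_final. Qed.

Lemma num_stages_pos : (0 < J)%nat.
Proof.
rewrite lt0n; apply/eqP => J0; have := n_lt_final; rewrite J0 INR_0 Rmult_0_l exp_0.
have := le_INR _ _ (elimT leP n_ge3); rewrite /=; lra.
Qed.

Definition state_ok (s : state) : Prop :=
  if s is Running j t _ then (t < m)%nat /\ (j <= J)%nat else True.

Definition steps_left (s : state) : nat :=
  if s is Running j t _ then ((J - j) * m - t)%nat else 0%nat.

Lemma m_pos : (0 < m)%nat.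
Proof. by rewrite /stage_len addn1. Qed.

Lemma inv_step s b : state_ok s -> ~~ stopped s -> state_ok (step s b).
Proof.
case: s => [j t x|j] //= [lt_tm le_jJ] run.
case: ifP => [lt_t1m | _] /=; first by split.
by case: Rle_dec => ? //=; split; [exact: m_pos | lia].
Qed.

Lemma rank_step s b : state_ok s -> ~~ stopped s -> (steps_left (step s b) < steps_left s)%nat.
Proof.
case: s => [j t x|j] //= [lt_tm le_jJ] run.
have m_le : (m <= (J - j) * m)%nat by apply: leq_pmull; lia.
case: ifP => /= _; first lia.
have -> : ((J - j) * m = (J - j.+1) * m + m)%nat by rewrite -mulSnr; congr (_ * _)%nat; lia.
by case: Rle_dec => ? /=; lia.
Qed.

Lemma bad_output_range j : 0 <= bad_output j <= 1.
Proof. by rewrite /bad_output; case: ifP => _; lra. Qed.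

Lemma overshot_S j : overshot j -> overshot j.+1.
Proof.
case: j => [|j] //=; case: Rle_dec => // small _.
by case: Rle_dec => // -[]; have := scale_le eps01 (leqnSn j); lra.
Qed.

Lemma err_pot_overshot j t x b : (j < J)%nat -> overshot j ->
  err_pot (step (Running j t x) b) <= 1.
Proof.
move=> lt_jJ over; rewrite /step; case: ifP => _ /=.
  by rewrite leqNgt lt_jJ over /=; lra.
case: Rle_dec => ? /=; first by have := bad_output_range j; lra.
case: ifP => _; first by have := bad_output_range j.+1; lra.
by move: (overshot_S over); rewrite /overshot => ->; lra.
Qed.

Lemma err_pot_stage_end j t x b : t.+1 = m -> (j < J)%nat -> ~~ overshot j ->
  err_pot (step (Running j t x) b)
  <= stage_err j m (if b then x.+1 else x) + future_err j.+1 (J - j.+1).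
Proof.
move=> end_t lt_jJ not_over; rewrite /step end_t ltnn.
set x' := if b then x.+1 else x.
have := stage_err_ge0 j m x'; have := future_err_ge0 j.+1 (J - j.+1).
case: Rle_dec => [x_low | /Rnot_le_lt x_high] /=.
  rewrite /bad_output; case: ifP => [_ | bad]; first lra.
  case: (Rle_dec (ratio eps * T j) K) => [large | /Rnot_le_lt small].
    by have := stage_err_end_low x_low large; lra.
  by rewrite estimate_good // -(ratio_scale eps) in bad.
case: ifP => [last_stage | not_last].
  rewrite /bad_output; case: ifP => [_ | bad]; first lra.
  case: (Rle_dec K (T j)) => [small | not_small].
    by have := stage_err_end_high x_high small; lra.
  have J_eq : J = j.+1 by lia.
  rewrite estimate_good // in bad; first by rewrite -J_eq; exact: K_lt_final.
  by rewrite /overshot; case: Rle_dec.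
rewrite /overshot; case: Rle_dec => [small | _] /=.
  by have := stage_err_end_high x_high small; lra.
have -> : (J - j.+1 = (J - j.+2).+1)%nat by lia.
by rewrite /=; lra.
Qed.

Lemma err_pot_super j t x : (t < m)%nat -> (j < J)%nat ->
  q j * err_pot (step (Running j t x) true) + (1 - q j) * err_pot (step (Running j t x) false)
  <= err_pot (Running j t x).
Proof.
move=> lt_tm lt_jJ; have [q0 q1] := stage_pos_prob01 j.
have pot_run : forall t' x', err_pot (Running j t' x') =
    if overshot j then 1 else stage_err j t' x' + future_err j.+1 (J - j.+1).
  by move=> t' x'; rewrite /= leqNgt lt_jJ.
rewrite pot_run; case: ifP => over.
  by have := err_pot_overshot t x true lt_jJ over;
     have := err_pot_overshot t x false lt_jJ over; nra.
rewrite (stage_err_step _ _ lt_tm).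
case: (ltnP t.+1 m) => [lt_t1m | ge_t1m].
  by rewrite /step lt_t1m !pot_run over; right; ring.
have end_t : t.+1 = m by lia.
have := err_pot_stage_end x true end_t lt_jJ (negbT over).
have := err_pot_stage_end x false end_t lt_jJ (negbT over).
rewrite -end_t; nra.
Qed.

Lemma rate_bound r : r <= - rate gap -> exp (M * r) <= exp (- M * rate gap).
Proof.
by move=> r_le; apply: exp_le; have := Rmult_le_compat_l _ _ _ (Rlt_le _ _ M_pos) r_le; lra.
Qed.

Lemma lower_pot_start j : ratio eps * T j <= K ->
  chernoff_pot (q j) (- tilt gap) (threshold gap) m 0 0 <= exp (- M * rate gap).
Proof.
move=> large; apply: Rle_trans (chernoff_pot_start _ _ _ (stage_pos_prob01 j)) (rate_bound _).
apply: lower_tail_rate; first exact: gap_range.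
by split; [exact: stage_pos_prob_large | exact: (proj2 (stage_pos_prob01 j))].
Qed.

Lemma upper_pot_start j : K <= T j ->
  chernoff_pot (q j) (tilt gap) (threshold gap) m 0 0 <= exp (- M * rate gap).
Proof.
move=> small; apply: Rle_trans (chernoff_pot_start _ _ _ (stage_pos_prob01 j)) (rate_bound _).
apply: upper_tail_rate; first exact: gap_range.
by split; [exact: (proj1 (stage_pos_prob01 j)) | exact: stage_pos_prob_small].
Qed.

Lemma stage_err_start j : stage_err j 0 0 <= exp (- M * rate gap).
Proof.
rewrite /stage_err; case: Rle_dec => [large | _] /=; first exact: lower_pot_start.
case: Rle_dec => [small | _] /=; [exact: upper_pot_start | exact/Rlt_le/exp_pos].
Qed.

Lemma future_err_le j d : future_err j d <= INR d * exp (- M * rate gap).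
Proof.
elim: d j => [|d IH] j; first by rewrite /= Rmult_0_l; exact: Rle_refl.
rewrite S_INR -[future_err _ _]/(stage_err j 0 0 + future_err j.+1 d).
by have := stage_err_start j; have := IH j.+1; lra.
Qed.

Lemma err_pot_start : err_pot (Running 0 0 0) <= INR J * exp (- M * rate gap).
Proof.
rewrite /= leqNgt num_stages_pos /=.
have -> : stage_err 0 0 0 + future_err 1 (J - 1) = future_err 0 J.
  by case: J num_stages_pos => [|J'] //= _; rewrite subn1.
exact: future_err_le.
Qed.

Lemma halt_prob_alg :
  1 - INR J * exp (- M * rate gap)
  <= halt_prob rho D (search_alg rho c eps n) (good_eps eps #|D|) (J * m).+1 [::].
Proof.
rewrite /search_alg halt_prob_chain; last exact: pools_distribution.
apply: Rle_trans (_ : 1 - err_pot (Running 0 0 0) <= _); first by have := err_pot_start; lra.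
apply: (@chain_success_ge _ _ _ _ _ _ state_ok _ _ _ steps_left) => //.
- exact: inv_step.
- by move=> -[j t x|j] // _ _; rewrite pool_pos_prob_stage; exact: stage_pos_prob01.
- move=> -[j t x|j] _ /= stop; last by rewrite /bad_output; case: ifP; lra.
  by rewrite stop /bad_output; case: ifP; lra.
- exact: rank_step.
- move=> -[j t x|j] //= [lt_tm _] run; rewrite pool_pos_prob_stage.
  by apply: err_pot_super; rewrite // ltnNge.
- by split; [exact: m_pos | ].
- by rewrite /= !subn0.
Qed.

Definition cont_pot (j t x : nat) : R :=
  if Rle_dec K (T j) then chernoff_pot (q j) (tilt gap) (threshold gap) m t x else 1.

Fixpoint cost_from (d j : nat) : R :=
  if d is d'.+1 then M + cont_pot j 0 0 * cost_from d' j.+1 else 0.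

Definition tests_pot (s : state) : R :=
  match s with
  | Running j t x =>
      if (J <= j)%nat then 0 else M - INR t + cont_pot j t x * cost_from (J - j.+1) j.+1
  | Stopped _ => 0
  end.

Lemma cont_pot_ge0 j t x : 0 <= cont_pot j t x.
Proof.
rewrite /cont_pot; case: Rle_dec => ? /=; [exact: chernoff_pot_ge0 (stage_pos_prob01 j) | lra].
Qed.

Lemma cost_from_ge0 d j : 0 <= cost_from d j.
Proof.
elim: d j => [|d IH] j /=; first exact: Rle_refl.
by have := cont_pot_ge0 j 0 0; have := IH j.+1; have := M_pos; nra.
Qed.

Lemma cont_pot_step j t x : (t < m)%nat ->
  cont_pot j t x = q j * cont_pot j t.+1 x.+1 + (1 - q j) * cont_pot j t.+1 x.
Proof.
by move=> lt_tm; rewrite /cont_pot; case: Rle_dec => ? /=; [exact: chernoff_pot_step | ring].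
Qed.

Lemma cont_pot_end j x : threshold gap * M < INR x -> 1 <= cont_pot j m x.
Proof.
move=> x_high; rewrite /cont_pot; case: Rle_dec => ? /=; last exact: Rle_refl.
by apply: chernoff_pot_end; have := gap_range rho_half eps01; rewrite /tilt; nra.
Qed.

Lemma tests_pot_ge0 s : state_ok s -> 0 <= tests_pot s.
Proof.
case: s => [j t x [lt_tm _]|j _] /=; last exact: Rle_refl.
case: ifP => _; first exact: Rle_refl.
have := lt_INR _ _ (elimT ltP lt_tm).
by have := cont_pot_ge0 j t x; have := cost_from_ge0 (J - j.+1) j.+1; nra.
Qed.

Lemma tests_pot_stage_end j t x b : t.+1 = m -> (j < J)%nat ->
  tests_pot (step (Running j t x) b)
  <= cont_pot j m (if b then x.+1 else x) * cost_from (J - j.+1) j.+1.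
Proof.
move=> end_t lt_jJ; rewrite /step end_t ltnn.
set x' := if b then x.+1 else x.
have := cont_pot_ge0 j m x'; have := cost_from_ge0 (J - j.+1) j.+1.
case: Rle_dec => [_ | /Rnot_le_lt x_high] /=; first nra.
case: ifP => [_ | not_last]; first nra.
have -> : (J - j.+1 = (J - j.+2).+1)%nat by lia.
have := cont_pot_end j x_high; rewrite /= Rminus_0_r; nra.
Qed.

Lemma tests_pot_super j t x : (t < m)%nat -> (j < J)%nat ->
  1 + q j * tests_pot (step (Running j t x) true)
    + (1 - q j) * tests_pot (step (Running j t x) false)
  <= tests_pot (Running j t x).
Proof.
move=> lt_tm lt_jJ; have [q0 q1] := stage_pos_prob01 j.
have pot_run : forall t' x', tests_pot (Running j t' x') =
    M - INR t' + cont_pot j t' x' * cost_from (J - j.+1) j.+1.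
  by move=> t' x'; rewrite /= leqNgt lt_jJ.
rewrite pot_run (cont_pot_step _ _ lt_tm).
case: (ltnP t.+1 m) => [lt_t1m | ge_t1m].
  by rewrite /step lt_t1m !pot_run S_INR; right; ring.
have end_t : t.+1 = m by lia.
have := tests_pot_stage_end x true end_t lt_jJ.
have := tests_pot_stage_end x false end_t lt_jJ.
have : M = INR t + 1 by rewrite -S_INR end_t.
rewrite -end_t; nra.
Qed.

Lemma cost_from_le j0 : K <= T j0 -> exp (- M * rate gap) <= 1/2 ->
  forall d j, cost_from d j <= M * (2 + INR (j0 - j)).
Proof.
move=> small_j0 err_half; elim=> [|d IH] j.
  by rewrite /=; have := M_pos; have := pos_INR (j0 - j); nra.
have := cost_from_ge0 d j.+1; have := IH j.+1; have := M_pos.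
have := le_INR _ _ (elimT leP (leq_sub2l j0 (leqnSn j))); have := pos_INR (j0 - j.+1).
rewrite /= /cont_pot; case: Rle_dec => [small | not_small] /=.
  have := chernoff_pot_ge0 (tilt gap) (threshold gap) m 0 0 (stage_pos_prob01 j).
  by have := upper_pot_start small; nra.
have lt_jj0 : (j < j0)%nat.
  by rewrite ltnNge; apply/negP => /(scale_le eps01) ?; apply: not_small; lra.
rewrite (_ : (j0 - j = (j0 - j.+1).+1)%nat) ?S_INR; [nra | lia].
Qed.

Lemma exp_tests_alg j0 N : K <= T j0 -> exp (- M * rate gap) <= 1/2 ->
  exp_tests rho D (search_alg rho c eps n) N [::] <= M * (2 + INR j0).
Proof.
move=> small_j0 err_half.
rewrite /search_alg exp_tests_chain; last exact: pools_distribution.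
apply: Rle_trans (_ : _ <= tests_pot (Running 0 0 0)) _.
  apply: (chain_tests_le (inv := state_ok)) => //.
  - exact: inv_step.
  - by move=> -[j t x|j] // _ _; rewrite pool_pos_prob_stage; exact: stage_pos_prob01.
  - exact: tests_pot_ge0.
  - move=> -[j t x|j] //= [lt_tm _] run; rewrite pool_pos_prob_stage.
    by apply: tests_pot_super; rewrite // ltnNge.
  - by split; [exact: m_pos | ].
have -> : tests_pot (Running 0 0 0) = cost_from J 0.
  rewrite /= leqNgt num_stages_pos /= Rminus_0_r.
  by case: J num_stages_pos => [|J'] //= _; rewrite subn1.
by have := cost_from_le small_j0 err_half J 0; rewrite subn0.
Qed.

End Analysis.

Section Asymptotics.
Variables (rho c eps : R) (n : nat).
Hypothesis rho_half : 0 < rho < 1/2.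
Hypothesis eps01 : 0 < eps < 1.
Hypothesis c_pos : 0 < c.
Hypothesis n_ge3 : (3 <= n)%nat.

Local Notation M := (INR (stage_len rho c eps n)).
Local Notation J := (INR (num_stages eps n)).
Local Notation rate := (rate (gap rho eps)).
Local Notation lam := (log_step eps).

Lemma n_ge1 : 1 <= INR n.
Proof. by have := le_INR _ _ (elimT leP n_ge3); rewrite /=; lra. Qed.

Lemma stage_len_bounds :
  (c + 1) * ln (INR n) <= M * rate /\ M <= ((c + 1) / rate + 2) * ln (INR n).
Proof.
have rate0 := rate_pos rho_half eps01; have ln_n := ln_ge1 n_ge3.
have z0 : 0 <= (c + 1) * ln (INR n) / rate.
  by apply/Rlt_le/Rdiv_lt_0_compat; nra.
have [z_lt z_le] := nat_above_spec z0.
have -> : M = INR (nat_above ((c + 1) * ln (INR n) / rate)) + 1.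
  by rewrite /stage_len addn1 S_INR.
have E : (c + 1) * ln (INR n) = (c + 1) * ln (INR n) / rate * rate by field; lra.
split; first by rewrite {1}E; apply: Rmult_le_compat_r; lra.
have -> : ((c + 1) / rate + 2) * ln (INR n) = (c + 1) * ln (INR n) / rate + 2 * ln (INR n).
  by field; lra.
lra.
Qed.

Lemma stage_err_le_pow : exp (- M * rate) <= Rpower (INR n) (- (c + 1)).
Proof.
by rewrite /Rpower; apply: exp_le; have := proj1 stage_len_bounds; lra.
Qed.

Lemma num_stages_le : J <= (1 / lam + 1) * INR n.
Proof.
have lam0 := log_step_pos eps01; have n1 := n_ge1.
have ln_n_pos : 0 < ln (INR n) by have := ln_ge1 n_ge3; lra.
have [_ J_le] := nat_above_spec (Rlt_le _ _ (Rdiv_lt_0_compat _ _ ln_n_pos lam0)).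
have : ln (INR n) / lam <= INR n * (1 / lam).
  rewrite /Rdiv Rmult_1_l; apply: Rmult_le_compat_r; first exact/Rlt_le/Rinv_0_lt_compat.
  by apply: ln_le_id; lra.
rewrite /num_stages; nra.
Qed.

Lemma total_err_le : J * exp (- M * rate) <= (1 / lam + 1) * Rpower (INR n) (- c).
Proof.
have n_pos : 0 < INR n by have := n_ge1; lra.
have pow_n : INR n * Rpower (INR n) (- (c + 1)) = Rpower (INR n) (- c).
  by rewrite -{1}(Rpower_1 (INR n)) // -Rpower_plus; congr Rpower; ring.
rewrite -pow_n -Rmult_assoc.
apply: Rmult_le_compat; [exact: pos_INR | exact/Rlt_le/exp_pos | exact: num_stages_le |].
exact: stage_err_le_pow.
Qed.

Lemma stage_err_le_half : exp (- M * rate) <= 1/2.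
Proof.
have n3 : 3 <= INR n by have := le_INR _ _ (elimT leP n_ge3); rewrite /=; lra.
have ln_n := ln_ge1 n_ge3; have M_rate := proj1 stage_len_bounds.
have arg_le : - M * rate <= - ln (INR n) by nra.
apply: Rle_trans (exp_le arg_le) _.
rewrite exp_Ropp exp_ln; last lra.
by rewrite /Rdiv Rmult_1_l; apply: Rinv_le_contravar; lra.
Qed.

Lemma target_stage k :
  exists j0, INR k <= scale eps j0 /\ 2 + INR j0 <= (8 + 1 / lam) * ln (INR k + 2).
Proof.
have lam0 := log_step_pos eps01; have k0 := pos_INR k.
have ln_k1 : 0 <= ln (INR k + 1) by rewrite -ln_1; apply: ln_le; lra.
have ln_k12 : ln (INR k + 1) <= ln (INR k + 2) by apply: ln_le; lra.
have ln_k2 : / 2 < ln (INR k + 2).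
  by apply: Rlt_le_trans ln_lt_2 _; apply: ln_le; lra.
set z := ln (INR k + 1) / lam.
have z0 : 0 <= z by apply: Rmult_le_pos => //; exact/Rlt_le/Rinv_0_lt_compat.
have [j_gt j_le] := nat_above_spec z0.
exists (nat_above z).+1; rewrite /scale S_INR; split.
  rewrite (_ : INR (nat_above z) + 1 - 1 = INR (nat_above z)); last ring.
  apply: Rle_trans (_ : exp (ln (INR k + 1)) <= _); first by rewrite exp_ln; lra.
  apply: exp_le; have := Rmult_le_compat_r _ _ _ (Rlt_le _ _ lam0) (Rlt_le _ _ j_gt).
  by rewrite /z /Rdiv Rmult_assoc Rinv_l; lra.
have : z <= ln (INR k + 2) * (1 / lam).
  rewrite /z /Rdiv Rmult_1_l; apply: Rmult_le_compat_r => //; exact/Rlt_le/Rinv_0_lt_compat.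
nra.
Qed.

Lemma exp_tests_alg_le (D : {set 'I_n}) N :
  exp_tests rho D (search_alg rho c eps n) N [::]
  <= ((c + 1) / rate + 2) * (8 + 1 / lam) * ln (INR #|D| + 2) * ln (INR n).
Proof.
have [j0 [small_j0 j0_le]] := target_stage #|D|.
apply: Rle_trans (exp_tests_alg rho_half eps01 n_ge3 N small_j0 stage_err_le_half) _.
have [_ M_le] := stage_len_bounds.
have j0_ge : 0 <= 2 + INR j0 by have := pos_INR j0; lra.
have := Rmult_le_compat _ _ _ _ (pos_INR _) j0_ge M_le j0_le.
by move=> tests_le; apply: Rle_trans tests_le _; right; ring.
Qed.

End Asymptotics.

Theorem search_alg_achieves rho c eps : 0 < rho < 1/2 -> 0 < eps < 1 -> 0 < c ->
  achieves rho c (good_eps eps) (search_alg rho c eps).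
Proof.
move=> rho_half eps01 c_pos; split; first by move=> n; exact: search_alg_valid.
exists (((c + 1) / rate (gap rho eps) + 2) * (8 + 1 / log_step eps)), (1 / log_step eps + 1), 3%nat.
move=> n n_ge3 D; split; first by move=> N; exact: exp_tests_alg_le.
move=> e e_pos; exists (num_stages eps n * stage_len rho c eps n).+1.
apply: Rle_trans (halt_prob_alg c D rho_half eps01 n_ge3).
by have := total_err_le rho_half eps01 c_pos n_ge3; lra.
Qed.

Lemma good_eps_half : good_eps (1/2) = good_half.
Proof.
apply: functional_extensionality => k; apply: functional_extensionality => kb.
have twice_k : INR (2 * k) = 2 * INR k by rewrite mult_INR.
rewrite /good_half /good_eps; case: Rle_dec => [half_le | half_gt] /=.
  have : INR kb <= INR (2 * k) by lra.
  by move=> /INR_le /leP ->.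
case: (leqP kb (2 * k)) => // le2k; have := le_INR _ _ (elimT leP le2k); lra.
Qed.

Theorem lemma3 (rho c : R) (hrho : (0 < rho < 1/2)%R) (hc : (0 < c)%R) :
  (exists alg : forall n : nat, strategy n, achieves rho c good_half alg) /\
  (forall eps : R, (0 < eps < 1)%R ->
     exists alg : forall n : nat, strategy n, achieves rho c (good_eps eps) alg).
Proof.
split; last by move=> eps eps01; exists (search_alg rho c eps); exact: search_alg_achieves.
exists (search_alg rho c (1/2)); rewrite -good_eps_half; apply: search_alg_achieves => //; lra.
Qed.
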